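(* For every positive integer $n$ there exists a graph $G$ with $St_{dom}(G)=n$.
   Context: A dominated coloring of a graph is a proper coloring in which every color class is dominated by at least one vertex, i.e. for each color class $C$ there is a vertex adjacent to every vertex of $C$; $\chi_{dom}(G)$ is the minimum number of colors in a dominated coloring. The dom-stability $St_{dom}(G)$ is the minimum number of vertices of $G$ whose removal changes the dominated chromatic number of $G$. *)

From mathcomp Require Import all_boot.
Set Implicit Arguments. Unset Strict Implicit. Unset Printing Implicit Defensive.

Definition simple_graph (T : finType) (e : rel T) : Prop :=
  irreflexive e /\ symmetric e.

Definition no_isolated (T : finType) (e : rel T) : Prop :=
  forall x : T, exists y : T, e x y.

(* c is a dominated coloring with (at most) k colors (colors 0..k-1) of the
   subgraph of (T,e) induced by the vertex set A. *)
Definition dominated_coloring (T : finType) (e : rel T) (A : {set T})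
    (k : nat) (c : T -> nat) : Prop :=
  (forall x, x \in A -> c x < k) /\
  (forall x y, x \in A -> y \in A -> e x y -> c x != c y) /\
  (forall i, i < k -> (exists x, x \in A /\ c x = i) ->
     exists v, v \in A /\ forall x, x \in A -> c x = i -> e v x).

Definition is_chi_dom (T : finType) (e : rel T) (A : {set T}) (k : nat) : Prop :=
  (exists c, dominated_coloring e A k c) /\
  (forall j c, j < k -> ~ dominated_coloring e A j c).

(* Removing S changes the dominated chromatic number: chi_dom(G - S) differs
   from chi_dom(G) (in particular when G - S has no dominated coloring). *)
Definition changes_chi_dom (T : finType) (e : rel T) (S : {set T}) : Prop :=
  ~ (forall k, is_chi_dom e [set: T] k <-> is_chi_dom e (~: S) k).

Definition is_St_dom (T : finType) (e : rel T) (n : nat) : Prop :=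
  (exists S : {set T}, #|S| = n /\ changes_chi_dom e S) /\
  (forall S : {set T}, #|S| < n -> ~ changes_chi_dom e S).

From mathcomp Require Import all_boot.

Set Implicit Arguments. Unset Strict Implicit. Unset Printing Implicit Defensive.

(* The witness is the complete bipartite graph K_{n,n}.  Colouring each side
   with its own colour is a dominated colouring (each side is dominated by any
   vertex of the other side), and no single colour is possible, so chi_dom = 2
   as long as both sides survive; deleting fewer than n vertices keeps both
   sides.  Deleting a whole side leaves an edgeless graph, in which no nonempty
   colour class is dominated, so that graph has no dominated colouring at all. *)

Section DominatedColoring.
Variables (T : finType) (e : rel T).

Lemma is_chi_dom_inj (A : {set T}) k k' :
  is_chi_dom e A k -> is_chi_dom e A k' -> k = k'.
Proof.
move=> [[c hc] hk] [[c' hc'] hk'].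
have [lt | lt | //] := ltngtP k k'; first by case: (hk' _ _ lt hc).
by case: (hk _ _ lt hc').
Qed.

Lemma edgeless_no_dominated_coloring (A : {set T}) k c :
  A != set0 -> {in A &, forall x y, ~~ e x y} -> ~ dominated_coloring e A k c.
Proof.
case/set0Pn=> x xA indep [ltk [_ hdom]].
have [v [vA /(_ x xA erefl) evx]] := hdom _ (ltk x xA) (ex_intro _ x (conj xA erefl)).
by move: (indep v x vA xA); rewrite evx.
Qed.

Lemma changes_chi_dom_edgeless k (S : {set T}) :
  is_chi_dom e [set: T] k -> ~: S != set0 ->
  {in ~: S &, forall x y, ~~ e x y} -> changes_chi_dom e S.
Proof.
move=> chiT nzS indep /(_ k) [/(_ chiT) [[c hc] _] _].
exact: edgeless_no_dominated_coloring hc.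
Qed.

Lemma same_chi_dom_unchanged k (S : {set T}) :
  is_chi_dom e [set: T] k -> is_chi_dom e (~: S) k -> ~ changes_chi_dom e S.
Proof.
move=> chiT chiS; apply=> j; split=> chij.
  by rewrite (is_chi_dom_inj chij chiT).
by rewrite (is_chi_dom_inj chij chiS).
Qed.

End DominatedColoring.

Section CompleteBipartite.
Variable V : finType.

Definition cbip_rel : rel (bool * V) := fun x y => x.1 != y.1.

Definition cbip_side (b : bool) : {set bool * V} := setX [set b] [set: V].

Lemma cbip_simple : simple_graph cbip_rel.
Proof. by split=> [x | x y]; rewrite /cbip_rel ?eqxx // eq_sym. Qed.

Lemma cbip_no_isolated : no_isolated cbip_rel.
Proof. by move=> x; exists (~~ x.1, x.2); rewrite /cbip_rel; case: x.1. Qed.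

Lemma card_cbip_side b : #|cbip_side b| = #|V|.
Proof. by rewrite cardsX cards1 cardsT mul1n. Qed.

Lemma cbip_side_edgeless b : {in cbip_side b &, forall x y, ~~ cbip_rel x y}.
Proof. by move=> x y; rewrite !inE !andbT /cbip_rel => /eqP-> /eqP->; rewrite eqxx. Qed.

Lemma chi_dom_cbip (A : {set bool * V}) a b :
  a \in A -> b \in A -> a.1 != b.1 -> is_chi_dom cbip_rel A 2.
Proof.
move=> aA bA ab; split.
  exists (fun x => nat_of_bool x.1); split; first by move=> x _; case: x.1.
  split; first by move=> x y _ _; rewrite /cbip_rel; case: x.1; case: y.1.
  move=> i _ [x [_ <-]].
  have [v [vA vx]] : exists v, v \in A /\ v.1 != x.1.
    by case: (eqVneq a.1 x.1) => [<- | ?]; [exists b; rewrite eq_sym | exists a].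
  exists v; split=> // y _ yx.
  have yx1 : y.1 = x.1 by move: yx; case: y.1; case: x.1.
  by rewrite /cbip_rel yx1.
move=> j c lt2 [ltj [proper _]].
have ca := ltj a aA; have cb := ltj b bA; clear ltj.
case: j lt2 ca cb => [|[|//]] // _.
by rewrite !ltnS !leqn0 => /eqP ca0 /eqP cb0; move: (proper a b aA bA ab); rewrite ca0 cb0.
Qed.

Lemma cbip_side_survives (S : {set bool * V}) b :
  #|S| < #|V| -> exists x, x \in ~: S /\ x.1 = b.
Proof.
move=> ltS; have : ~~ (cbip_side b \subset S).
  by apply: contraTN ltS => /subset_leq_card; rewrite card_cbip_side leqNgt.
case/subsetPn=> x; rewrite !inE andbT => /eqP xb xS.
by exists x; rewrite inE xS.
Qed.

Lemma St_dom_cbip : 0 < #|V| -> is_St_dom cbip_rel #|V|.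
Proof.
case/card_gt0P=> v0 _.
have chiT : is_chi_dom cbip_rel [set: bool * V] 2.
  by apply: (@chi_dom_cbip _ (true, v0) (false, v0)); rewrite ?in_setT.
split.
  exists (cbip_side true); split; first exact: card_cbip_side.
  apply: changes_chi_dom_edgeless chiT _ _.
    by apply/set0Pn; exists (false, v0); rewrite !inE.
  have -> : ~: cbip_side true = cbip_side false.
    by apply/setP=> -[[] x]; rewrite !inE.
  exact: cbip_side_edgeless.
move=> S ltS; have [a [aS a1]] := cbip_side_survives true ltS.
have [b [bS b1]] := cbip_side_survives false ltS.
by apply: same_chi_dom_unchanged chiT (chi_dom_cbip aS bS _); rewrite a1 b1.
Qed.

End CompleteBipartite.

Theorem mainTheorem10 (n : nat) (hn : 0 < n) :
  exists (T : finType) (e : rel T),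
    simple_graph e /\ no_isolated e /\ is_St_dom e n.
Proof.
exists (bool * 'I_n)%type, (@cbip_rel 'I_n).
split; first exact: cbip_simple.
split; first exact: cbip_no_isolated.
by rewrite -[X in is_St_dom _ X]card_ord; apply: St_dom_cbip; rewrite card_ord.
Qed.
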